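(* Consider the following TOPSIS procedure, parametrized by a metric $\rho$ on $\tilde{\mathbb{I}}$. Given $n$ alternatives $A_1,\dots,A_n$, $m$ attributes $\mathscr{O}_1,\dots,\mathscr{O}_m$ each classified as benefit or cost, an intuitionistic fuzzy decision matrix $R=(r_{ij})_{n\times m}$ with $r_{ij}=\langle\mu_{ij},\nu_{ij}\rangle\in\tilde{\mathbb{I}}$, real weights $\omega_j\in(0,1]$ with $\sum_j\omega_j=1$, and $\lambda\ge1$: (i) $\bar r_{ij}=\langle\bar\mu_{ij},\bar\nu_{ij}\rangle=r_{ij}$ for benefit attributes and $\bar r_{ij}=\langle\nu_{ij},\mu_{ij}\rangle$ for cost attributes; (ii) $\langle\mu_j^+,\nu_j^+\rangle=\langle\max_i\bar\mu_{ij},\min_i\bar\nu_{ij}\rangle$, $\langle\mu_j^-,\nu_j^-\rangle=\langle\min_i\bar\mu_{ij},\max_i\bar\nu_{ij}\rangle$; (iii) $\mathbf{S}(A_i,\mathbf{A}^{\pm})=1-\sum_{j=1}^m\omega_j\,\rho(\bar r_{ij},\langle\mu_j^{\pm},\nu_j^{\pm}\rangle)$; (iv) $\mathscr{C}_i=\frac{\mathbf{S}(A_i,\mathbf{A}^+)}{\mathbf{S}(A_i,\mathbf{A}^+)+\mathbf{S}(A_i,\mathbf{A}^-)}$. Then: (a) with $\rho=\tilde\varrho^{(\lambda)}$, the procedure is increasing with $\le_{ZX}$, i.e., if $\bar r_{i_1j}\le_{ZX}\bar r_{i_2j}$ for all $j$, then $\mathscr{C}_{i_1}\le\mathscr{C}_{i_2}$;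 (b) with $\rho=\varrho^{(\lambda)}_{A,B}$, the procedure is increasing with $\le_{A,B}$, i.e., if $\bar r_{i_1j}\le_{A,B}\bar r_{i_2j}$ for all $j$, then $\mathscr{C}_{i_1}\le\mathscr{C}_{i_2}$.
   Context: $\tilde{\mathbb{I}}=\{\langle\mu,\nu\rangle\in[0,1]^2\mid\mu+\nu\le1\}$. For $\alpha=\langle\mu_\alpha,\nu_\alpha\rangle$: $h(\alpha)=\mu_\alpha+\nu_\alpha$, $\pi_\alpha=1-\mu_\alpha-\nu_\alpha$, $L(\alpha)=\frac{1-\nu_\alpha}{1+\pi_\alpha}$. Order $\le_{ZX}$: $\alpha<_{ZX}\beta$ if $L(\alpha)<L(\beta)$, or $L(\alpha)=L(\beta)$ and $h(\alpha)<h(\beta)$; $\alpha\le_{ZX}\beta$ means $\alpha<_{ZX}\beta$ or $\alpha=\beta$. $\tilde\varrho^{(\lambda)}(\alpha,\beta)=\frac{1}{1+\lambda}(1+\lambda|L(\alpha)-L(\beta)|)$ if $L(\alpha)\ne L(\beta)$, and $=\frac{1}{1+\lambda}|h(\alpha)-h(\beta)|$ otherwise. An aggregation function is $A:[0,1]^2\to[0,1]$ nondecreasing in each variable with $A(0,0)=0$, $A(1,1)=1$. $A,B$ are continuous aggregation functions such that $A(x_1,y_1)=A(x_2,y_2)$ and $B(x_1,y_1)=B(x_2,y_2)$ together imply $(x_1,y_1)=(x_2,y_2)$. Put $\overline{A}(\alpha)=A(\mu_\alpha,1-\nu_\alpha)$, $\overline{B}(\alpha)=B(\mu_\alpha,1-\nu_\alpha)$.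 Order $\le_{A,B}$: $\alpha\le_{A,B}\beta$ iff $\overline{A}(\alpha)<\overline{A}(\beta)$ or ($\overline{A}(\alpha)=\overline{A}(\beta)$ and $\overline{B}(\alpha)\le\overline{B}(\beta)$). $\varrho^{(\lambda)}_{A,B}(\alpha,\beta)=\frac12(1+|\overline{A}(\alpha)-\overline{A}(\beta)|)$ if $\overline{A}(\alpha)\ne\overline{A}(\beta)$, and $=\frac12|\overline{B}(\alpha)-\overline{B}(\beta)|$ otherwise. *)

From HB Require Import structures.
From mathcomp Require Import all_boot all_order all_algebra.
From mathcomp Require Import all_classical all_reals all_analysis.
Set Implicit Arguments. Unset Strict Implicit. Unset Printing Implicit Defensive.
Import Order.TTheory GRing.Theory Num.Theory.
Import numFieldNormedType.Exports.
Local Open Scope ring_scope.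

Section IFN.
Variable R : realType.

(* An intuitionistic fuzzy value <mu, nu> is a pair; membership in I~. *)
Definition IFN := (R * R)%type.
Definition inI (a : IFN) : Prop := 0 <= a.1 /\ 0 <= a.2 /\ a.1 + a.2 <= 1.

Definition hI (a : IFN) : R := a.1 + a.2.
Definition piI (a : IFN) : R := 1 - a.1 - a.2.
Definition LI (a : IFN) : R := (1 - a.2) / (1 + piI a).

Definition ltZX (a b : IFN) : Prop :=
  LI a < LI b \/ (LI a = LI b /\ hI a < hI b).
Definition leZX (a b : IFN) : Prop := ltZX a b \/ a = b.

Definition rhoZX (lam : R) (a b : IFN) : R :=
  if LI a != LI b then (1 + lam * `|LI a - LI b|) / (1 + lam)
  else `|hI a - hI b| / (1 + lam).

(* A-bar, B-bar, order <=_{A,B} and the metric rho_{A,B}^(lambda)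
   (whose defining formula does not involve lambda). *)
Definition barF (A : R -> R -> R) (a : IFN) : R := A a.1 (1 - a.2).
Definition leAB (A B : R -> R -> R) (a b : IFN) : Prop :=
  barF A a < barF A b \/ (barF A a = barF A b /\ barF B a <= barF B b).
Definition rhoAB (A B : R -> R -> R) (a b : IFN) : R :=
  if barF A a != barF A b then (1 + `|barF A a - barF A b|) / 2
  else `|barF B a - barF B b| / 2.

Definition unit_sq : set (R * R) :=
  [set p | 0 <= p.1 <= 1 /\ 0 <= p.2 <= 1].
Definition is_cont_aggregation (A : R -> R -> R) : Prop :=
  (forall x y, 0 <= x <= 1 -> 0 <= y <= 1 -> 0 <= A x y <= 1) /\
      (forall x1 x2 y, 0 <= x1 -> x1 <= x2 -> x2 <= 1 -> 0 <= y <= 1 ->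
          A x1 y <= A x2 y) /\
      (forall x y1 y2, 0 <= x <= 1 -> 0 <= y1 -> y1 <= y2 -> y2 <= 1 ->
          A x y1 <= A x y2) /\
      A 0 0 = 0 /\ A 1 1 = 1 /\
      {within unit_sq, continuous (fun p : R * R => A p.1 p.2)}%classic.

Section Topsis.
Variables (n m : nat) (benefit : 'I_m -> bool) (r : 'I_n -> 'I_m -> IFN)
  (w : 'I_m -> R) (rho : IFN -> IFN -> R).

Definition rbar (i : 'I_n) (j : 'I_m) : IFN :=
  if benefit j then r i j else ((r i j).2, (r i j).1).

(* values lie in [0,1], so 0 (resp. 1) is a neutral start for max (resp. min) *)
Definition ideal_pos (j : 'I_m) : IFN :=
  (\big[Num.max/0]_(i < n) (rbar i j).1, \big[Num.min/1]_(i < n) (rbar i j).2).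
Definition ideal_neg (j : 'I_m) : IFN :=
  (\big[Num.min/1]_(i < n) (rbar i j).1, \big[Num.max/0]_(i < n) (rbar i j).2).

Definition Sim (i : 'I_n) (ideal : 'I_m -> IFN) : R :=
  1 - \sum_(j < m) w j * rho (rbar i j) (ideal j).

Definition closeness (i : 'I_n) : R :=
  Sim i ideal_pos / (Sim i ideal_pos + Sim i ideal_neg).
End Topsis.

End IFN.

From HB Require Import structures.
From mathcomp Require Import all_boot all_order all_algebra.
From mathcomp Require Import all_classical all_reals all_analysis.
From mathcomp Require Import ring lra.
Set Implicit Arguments. Unset Strict Implicit. Unset Printing Implicit Defensive.
Import Order.TTheory GRing.Theory Num.Theory.
Import numFieldNormedType.Exports.
Local Open Scope ring_scope.

(* Both metrics are lexicographic metrics for a pair of scores (f, g): the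
   distance is (1 + c |f a - f b|) / k when the f-scores differ and
   |g a - g b| / k otherwise, with (f, g) = (L, h) for rho~ and
   (A-bar, B-bar) for rho_{A,B}.  The positive ideal dominates every normalized rating
   componentwise, the negative one is dominated by all of them, and
   componentwise dominance implies lexicographic dominance for both score
   pairs.  Hence raising a rating lexicographically brings it closer to A+
   and farther from A-, so S(A_i, A+) grows, S(A_i, A-) shrinks, and so does
   the ratio C_i = S+ / (S+ + S-). *)

Section RealFacts.
Variable R : realFieldType.

Lemma normB_le1 (x y : R) : 0 <= x <= 1 -> 0 <= y <= 1 -> `|x - y| <= 1.
Proof. by rewrite ler_norml => /andP[? ?] /andP[? ?]; apply/andP; split; lra. Qed.

Lemma ler_ratio (x1 x2 y1 y2 : R) : 0 <= x1 -> x1 <= x2 -> 0 <= y2 -> y2 <= y1 ->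
  x1 / (x1 + y1) <= x2 / (x2 + y2).
Proof.
rewrite le_eqVlt => /predU1P[<- | x1_gt0] x12 y2_ge0 y21.
  by rewrite mul0r divr_ge0 //; lra.
rewrite ler_pdivrMr; last lra.
rewrite mulrAC ler_pdivlMr; last lra.
nra.
Qed.

End RealFacts.

Section LexicographicMetric.
Variables (R : realFieldType) (T : Type).
Implicit Types (f g : T -> R) (a b p q : T) (c k : R).

Definition lex_le f g a b : Prop := f a < f b \/ (f a = f b /\ g a <= g b).

Definition lex_dist c k f g a b : R :=
  if f a != f b then (1 + c * `|f a - f b|) / k else `|g a - g b| / k.

Lemma lex_dist_le1 c k f g a b : 0 <= c -> 1 + c <= k ->
  `|f a - f b| <= 1 -> `|g a - g b| <= 1 -> lex_dist c k f g a b <= 1.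
Proof.
move=> c_ge0 ck fab gab; rewrite /lex_dist.
by case: ifP => _; rewrite ler_pdivrMr ?mul1r; nra.
Qed.

Lemma lex_dist_le_above c k f g a b p : 0 <= c -> 0 <= k ->
  lex_le f g a b -> lex_le f g b p -> `|g b - g p| <= 1 ->
  lex_dist c k f g b p <= lex_dist c k f g a p.
Proof.
move=> c_ge0 k_ge0 ab bp gbp; rewrite /lex_dist.
have [fbp | fbp] := eqVneq (f b) (f p).
  have [fap | fap] := eqVneq (f a) (f p); apply: ler_wpM2r; rewrite ?invr_ge0 //=.
    have [gab gbp'] : g a <= g b /\ g b <= g p by case: ab; case: bp; lra.
    by rewrite !(distrC _ (g p)) !ger0_norm; lra.
  by have := normr_ge0 (f a - f p); nra.
have fbp_lt : f b < f p by case: bp => [|[]]; [|move/eqP: fbp].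
have fab : f a <= f b by case: ab => [/ltW|[->]].
rewrite /= ifT; last by apply/eqP; lra.
apply: ler_wpM2r; first by rewrite invr_ge0.
rewrite distrC ger0_norm; last lra.
rewrite distrC ger0_norm; last lra.
nra.
Qed.

Lemma lex_le_opp f g a b :
  lex_le f g b a -> lex_le (fun x => - f x) (fun x => - g x) a b.
Proof. by rewrite /lex_le ltrN2 lerN2 => -[|[->]]; [left | right]. Qed.

Lemma lex_dist_opp c k f g a b :
  lex_dist c k (fun x => - f x) (fun x => - g x) a b = lex_dist c k f g a b.
Proof. by rewrite /lex_dist /= eqr_opp -!opprD !normrN. Qed.

Lemma lex_dist_le_below c k f g a b q : 0 <= c -> 0 <= k ->
  lex_le f g q a -> lex_le f g a b -> `|g a - g q| <= 1 ->
  lex_dist c k f g a q <= lex_dist c k f g b q.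
Proof.
move=> c_ge0 k_ge0 qa ab gaq; rewrite -!(lex_dist_opp c k f g).
apply: lex_dist_le_above => //; try exact: lex_le_opp.
by rewrite /= -opprD normrN.
Qed.

End LexicographicMetric.

Section IntuitionisticFuzzyValues.
Variable R : realType.
Implicit Types (a b p q : IFN R) (lam : R) (A B : R -> R -> R).

Definition leIF a b : Prop := a.1 <= b.1 /\ b.2 <= a.2.

Lemma hI_01 a : inI a -> 0 <= hI a <= 1.
Proof. by case=> ? [? ?]; rewrite /hI; apply/andP; split; lra. Qed.

Lemma LI_01 a : inI a -> 0 <= LI a <= 1.
Proof.
case=> ? [? ?]; rewrite /LI /piI.
have d_gt0 : 0 < 1 + (1 - a.1 - a.2) by lra.
by rewrite divr_ge0 ?ler_pdivrMr ?mul1r //=; lra.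
Qed.

Lemma leIF_lexZX a b : inI a -> inI b -> leIF a b -> lex_le (@LI R) (@hI R) a b.
Proof.
case: a b => [mu nu] [mu' nu']; rewrite /inI /leIF /lex_le /LI /hI /piI /=.
move=> [? [? ?]] [? [? ?]] [mu_le nu_le].
set N1 := (nu - nu') * (1 - mu); set N2 := (1 - nu) * (mu' - mu).
have N1_ge0 : 0 <= N1 by rewrite mulr_ge0 //; lra.
have N2_ge0 : 0 <= N2 by rewrite mulr_ge0 //; lra.
have LIB : (1 - nu') / (1 + (1 - mu' - nu')) - (1 - nu) / (1 + (1 - mu - nu)) =
    (N1 + N2) / ((1 + (1 - mu' - nu')) * (1 + (1 - mu - nu))).
  by rewrite /N1 /N2; field; apply/andP; split; apply/eqP; lra.
have [N_eq0 | N_gt0] := eqVneq (N1 + N2) 0; last first.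
  left; rewrite -subr_gt0 LIB divr_gt0 ?mulr_gt0 //; lra.
have nu_eq : nu = nu'.
  have /eqP : N1 = 0 by lra.
  by rewrite mulf_eq0 => /orP[|] /eqP; lra.
have mu_eq : mu = mu'.
  have /eqP : N2 = 0 by lra.
  by rewrite mulf_eq0 => /orP[|] /eqP; lra.
by right; rewrite mu_eq nu_eq.
Qed.

Lemma leZX_lex a b : leZX a b -> lex_le (@LI R) (@hI R) a b.
Proof. by case=> [[|[? /ltW]] | ->]; [left | right | right]. Qed.

Lemma rhoZXE lam : rhoZX lam = lex_dist lam (1 + lam) (@LI R) (@hI R).
Proof. by []. Qed.

Lemma rhoZX_le1 lam a b : 0 <= lam -> inI a -> inI b -> rhoZX lam a b <= 1.
Proof.
move=> lam_ge0 ha hb; rewrite rhoZXE.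
by apply: lex_dist_le1 => //; apply: normB_le1; rewrite ?LI_01 ?hI_01.
Qed.

Lemma rhoZX_le_above lam a b p : 0 <= lam -> inI b -> inI p ->
  leZX a b -> leIF b p -> rhoZX lam b p <= rhoZX lam a p.
Proof.
move=> lam_ge0 hb hp ab bp; rewrite rhoZXE.
apply: lex_dist_le_above; [lra | lra | exact: leZX_lex | exact: leIF_lexZX |].
by apply: normB_le1; rewrite ?hI_01.
Qed.

Lemma rhoZX_le_below lam a b q : 0 <= lam -> inI a -> inI q ->
  leZX a b -> leIF q a -> rhoZX lam a q <= rhoZX lam b q.
Proof.
move=> lam_ge0 ha hq ab qa; rewrite rhoZXE.
apply: lex_dist_le_below; [lra | lra | exact: leIF_lexZX | exact: leZX_lex |].
by apply: normB_le1; rewrite ?hI_01.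
Qed.

Lemma barF_01 A a : is_cont_aggregation A -> inI a -> 0 <= barF A a <= 1.
Proof. by case=> A01 _ [? [? ?]]; apply: A01; apply/andP; split; lra. Qed.

Lemma barF_leIF A a b : is_cont_aggregation A -> inI a -> inI b -> leIF a b ->
  barF A a <= barF A b.
Proof.
case=> _ [A_mono1 [A_mono2 _]] [? [? ?]] [? [? ?]] [? ?].
apply: (@le_trans _ _ (A b.1 (1 - a.2))).
  by apply: A_mono1; try apply/andP; try split; lra.
by apply: A_mono2; try apply/andP; try split; lra.
Qed.

Lemma leIF_lexAB A B a b : is_cont_aggregation A -> is_cont_aggregation B ->
  inI a -> inI b -> leIF a b -> lex_le (barF A) (barF B) a b.
Proof.
move=> hA hB ha hb ab; have := barF_leIF hA ha hb ab.
by rewrite le_eqVlt => /predU1P[eqA | ?]; [right; split; last apply: barF_leIF | left].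
Qed.

Lemma rhoABE A B a b : rhoAB A B a b = lex_dist 1 2 (barF A) (barF B) a b.
Proof. by rewrite /rhoAB /lex_dist mul1r. Qed.

Lemma rhoAB_le1 A B a b : is_cont_aggregation A -> is_cont_aggregation B ->
  inI a -> inI b -> rhoAB A B a b <= 1.
Proof.
move=> hA hB ha hb; rewrite rhoABE.
by apply: lex_dist_le1 => //; apply: normB_le1; rewrite ?barF_01.
Qed.

Lemma rhoAB_le_above A B a b p : is_cont_aggregation A -> is_cont_aggregation B ->
  inI b -> inI p -> leAB A B a b -> leIF b p -> rhoAB A B b p <= rhoAB A B a p.
Proof.
move=> hA hB hb hp ab bp; rewrite !rhoABE.
apply: lex_dist_le_above => //; first exact: leIF_lexAB.
by apply: normB_le1; rewrite ?barF_01.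
Qed.

Lemma rhoAB_le_below A B a b q : is_cont_aggregation A -> is_cont_aggregation B ->
  inI a -> inI q -> leAB A B a b -> leIF q a -> rhoAB A B a q <= rhoAB A B b q.
Proof.
move=> hA hB ha hq ab qa; rewrite !rhoABE.
apply: lex_dist_le_below => //; first exact: leIF_lexAB.
by apply: normB_le1; rewrite ?barF_01.
Qed.

End IntuitionisticFuzzyValues.

Section Topsis.
Variables (R : realType) (n m : nat) (benefit : 'I_m -> bool).
Variables (r : 'I_n -> 'I_m -> IFN R) (w : 'I_m -> R) (rho : IFN R -> IFN R -> R).
Hypothesis r_inI : forall i j, inI (r i j).
Hypothesis w_ge0 : forall j, 0 <= w j.

Lemma rbar_inI i j : inI (rbar benefit r i j).
Proof.
rewrite /rbar; case: (benefit j); first exact: r_inI.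
by case: (r_inI i j) => ? [? ?]; rewrite /inI /=; lra.
Qed.

Lemma leIF_ideal_pos i j : leIF (rbar benefit r i j) (ideal_pos benefit r j).
Proof. by split; [apply: le_bigmax | apply: bigmin_le]. Qed.

Lemma ideal_neg_leIF i j : leIF (ideal_neg benefit r j) (rbar benefit r i j).
Proof. by split; [apply: bigmin_le | apply: le_bigmax]. Qed.

Lemma ideal_pos_inI j : inI (ideal_pos benefit r j).
Proof.
split; first exact: bigmax_ge_id.
split; first by apply: le_bigmin => // i _; case: (rbar_inI i j) => _ [].
rewrite -lerBrDr; apply: bigmax_le => [|i _]; first by rewrite subr_ge0 bigmin_le_id.
have [_ nu_le] := leIF_ideal_pos i j.
by case: (rbar_inI i j) => _ [_]; lra.
Qed.

Lemma ideal_neg_inI j : inI (ideal_neg benefit r j).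
Proof.
split; first by apply: le_bigmin => // i _; case: (rbar_inI i j).
split; first exact: bigmax_ge_id.
rewrite -lerBrDl; apply: bigmax_le => [|i _]; first by rewrite subr_ge0 bigmin_le_id.
have [mu_ge _] := ideal_neg_leIF i j.
by case: (rbar_inI i j) => _ [_]; lra.
Qed.

Lemma Sim_ge0 i ideal : \sum_(j < m) w j = 1 ->
  (forall j, rho (rbar benefit r i j) (ideal j) <= 1) ->
  0 <= Sim benefit r w rho i ideal.
Proof.
move=> w_sum1 rho_le1; rewrite subr_ge0 -[leRHS]w_sum1; apply: ler_sum => j _.
by rewrite -[leRHS]mulr1 ler_wpM2l ?w_ge0.
Qed.

Lemma Sim_le i1 i2 ideal :
  (forall j, rho (rbar benefit r i2 j) (ideal j) <= rho (rbar benefit r i1 j) (ideal j)) ->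
  Sim benefit r w rho i1 ideal <= Sim benefit r w rho i2 ideal.
Proof. by move=> rho_le; rewrite lerD2l lerN2 ler_sum // => j _; rewrite ler_wpM2l ?w_ge0. Qed.

Lemma closeness_mono (le : IFN R -> IFN R -> Prop) i1 i2 :
  \sum_(j < m) w j = 1 ->
  (forall a b, inI a -> inI b -> rho a b <= 1) ->
  (forall a b p, inI a -> inI b -> inI p -> le a b -> leIF b p -> rho b p <= rho a p) ->
  (forall a b q, inI a -> inI b -> inI q -> le a b -> leIF q a -> rho a q <= rho b q) ->
  (forall j, le (rbar benefit r i1 j) (rbar benefit r i2 j)) ->
  closeness benefit r w rho i1 <= closeness benefit r w rho i2.
Proof.
move=> w_sum1 rho_le1 rho_above rho_below le12; apply: ler_ratio.
- by apply: Sim_ge0 => // j; apply: rho_le1 (rbar_inI _ _) (ideal_pos_inI _).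
- apply: Sim_le => j.
  exact: rho_above (rbar_inI _ _) (rbar_inI _ _) (ideal_pos_inI _) (le12 j) (leIF_ideal_pos _ _).
- by apply: Sim_ge0 => // j; apply: rho_le1 (rbar_inI _ _) (ideal_neg_inI _).
- apply: Sim_le => j.
  exact: rho_below (rbar_inI _ _) (rbar_inI _ _) (ideal_neg_inI _) (le12 j) (ideal_neg_leIF _ _).
Qed.

End Topsis.

Theorem theorem7 (R : realType) (n m : nat) (benefit : 'I_m -> bool)
  (r : 'I_n -> 'I_m -> IFN R) (w : 'I_m -> R) (lam : R)
  (A B : R -> R -> R) :
  (forall i j, inI (r i j)) ->
  (forall j, 0 < w j <= 1) ->
  \sum_(j < m) w j = 1 ->
  1 <= lam ->
  is_cont_aggregation A -> is_cont_aggregation B ->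
  (forall x1 y1 x2 y2 : R, 0 <= x1 <= 1 -> 0 <= y1 <= 1 ->
     0 <= x2 <= 1 -> 0 <= y2 <= 1 ->
     A x1 y1 = A x2 y2 -> B x1 y1 = B x2 y2 -> (x1, y1) = (x2, y2)) ->
  (forall i1 i2 : 'I_n,
     (forall j, leZX (rbar benefit r i1 j) (rbar benefit r i2 j)) ->
     closeness benefit r w (rhoZX lam) i1 <= closeness benefit r w (rhoZX lam) i2)
  /\
  (forall i1 i2 : 'I_n,
     (forall j, leAB A B (rbar benefit r i1 j) (rbar benefit r i2 j)) ->
     closeness benefit r w (rhoAB A B) i1 <= closeness benefit r w (rhoAB A B) i2).
Proof.
move=> r_inI w_bnd w_sum1 lam_ge1 hA hB _.
have w_ge0 j : 0 <= w j by case/andP: (w_bnd j) => /ltW.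
have lam_ge0 : 0 <= lam by lra.
split=> i1 i2; apply: closeness_mono => //.
- by move=> a b; apply: rhoZX_le1.
- by move=> a b p _; apply: rhoZX_le_above.
- by move=> a b q ha _; apply: rhoZX_le_below.
- by move=> a b; apply: rhoAB_le1.
- by move=> a b p _; apply: rhoAB_le_above.
- by move=> a b q ha _; apply: rhoAB_le_below.
Qed.
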